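(* Let $n\ge1$ and let $\mathcal{G}=(\mathcal{V},\mathcal{E})$ be the $4n$-vertex graph with vertex set $\mathcal{V}=\{(b_1,b_2,c):b_1,b_2\in\{0,1\},c\in[n]\}$ and an edge from $(0,b,c)$ to $(1,b',c)$ for every $b,b'\in\{0,1\}$ and $c\in[n]$ (and no other edges). Let $\alpha\ge0$ and let $\mathcal{A}$ be an algorithm that is $(\epsilon,\delta)$-differentially private on $\mathcal{G}$ and that on every input $w:\mathcal{E}\to\{0,1\}$ produces a perfect matching of expected weight at most $\alpha$ greater than the minimum weight of a perfect matching. Then there exists a $(2\epsilon,(1+e^{\epsilon})\delta)$-differentially private algorithm $\mathcal{B}$ which on every input $x\in\{0,1\}^n$ produces $y\in\{0,1\}^n$ with expected Hamming distance to $x$ at most $\alpha$.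
   Context: Private edge weight model: for a graph $\mathcal{G}=(\mathcal{V},\mathcal{E})$, a weight function is $w:\mathcal{E}\to\mathbb{R}$. Two weight functions $w,w'$ are neighboring if $\sum_{e\in\mathcal{E}}|w(e)-w'(e)|\le1$. A randomized algorithm $\mathcal{A}$ on weight functions is $(\epsilon,\delta)$-differentially private on $\mathcal{G}$ if for all neighboring $w,w'$ and all sets $S$ of outputs, $\Pr[\mathcal{A}(w)\in S]\le e^{\epsilon}\Pr[\mathcal{A}(w')\in S]+\delta$. A randomized algorithm $\mathcal{B}$ with inputs in $\{0,1\}^n$ is $(\epsilon',\delta')$-differentially private if for all $x,x'\in\{0,1\}^n$ differing in exactly one coordinate and all sets $S$ of outputs, $\Pr[\mathcal{B}(x)\in S]\le e^{\epsilon'}\Pr[\mathcal{B}(x')\in S]+\delta'$. The weight of a matching is the sum of its edge weights. *)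

From HB Require Import structures.
From mathcomp Require Import all_boot all_order all_algebra.
From mathcomp Require Import reals sequences exp.
Set Implicit Arguments. Unset Strict Implicit. Unset Printing Implicit Defensive.
Import Order.TTheory GRing.Theory Num.Theory.
Local Open Scope ring_scope.

Definition vert (n : nat) : finType := (bool * bool * 'I_n)%type.
(* Edges are indexed by (b, b', c): the edge from (0,b,c) to (1,b',c). *)
Definition edge (n : nat) : finType := (bool * bool * 'I_n)%type.
Definition esrc n (e : edge n) : vert n := (false, e.1.1, e.2).
Definition edst n (e : edge n) : vert n := (true, e.1.2, e.2).

Definition perfect_matching n (M : {set edge n}) : bool :=
  [forall v : vert n, #|[set e in M | (esrc e == v) || (edst e == v)]| == 1%N].

Definition mweight (R : realType) n (w : edge n -> R) (M : {set edge n}) : R :=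
  \sum_(e in M) w e.

Definition is_dist (R : realType) (T : finType) (p : {ffun T -> R}) : Prop :=
  (forall t, 0 <= p t) /\ \sum_(t : T) p t = 1.

Definition prob (R : realType) (T : finType) (p : {ffun T -> R}) (S : {set T}) : R :=
  \sum_(t in S) p t.

Definition dp_edge (R : realType) n (eps delta : R)
    (A : (edge n -> R) -> {ffun {set edge n} -> R}) : Prop :=
  forall w w' : edge n -> R, \sum_(e : edge n) `|w e - w' e| <= 1 ->
  forall S : {set {set edge n}},
    prob (A w) S <= expR eps * prob (A w') S + delta.

Definition bvec n := {ffun 'I_n -> bool}.

Definition hamming n (x y : bvec n) : nat := #|[set i | x i != y i]|.

Definition dp_bits (R : realType) n (eps delta : R)
    (B : bvec n -> {ffun bvec n -> R}) : Prop :=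
  forall x x' : bvec n, hamming x x' = 1%N ->
  forall S : {set bvec n},
    prob (B x) S <= expR eps * prob (B x') S + delta.

From mathcomp Require Import all_boot all_order all_algebra.
From mathcomp Require Import reals sequences exp lra.
Set Implicit Arguments. Unset Strict Implicit. Unset Printing Implicit Defensive.
Import Order.TTheory GRing.Theory Num.Theory.
Local Open Scope ring_scope.

(** Each block {(b1,b2,c) : b1, b2 in {0,1}} of the graph has exactly two
perfect matchings, the parallel one and the crossed one, so perfect matchings
of G are in bijection with {0,1}^n.  Give the edge from (0,0,c) to (1,1-x_c,c)
weight 1 and all other edges weight 0: the matching encoding x has weight 0,
and the weight of any perfect matching is the Hamming distance between x and
the bit string it encodes.  Decoding the output of A therefore solves the bit
problem with the same error.  Neighbouring bit strings x, x' give weight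
functions at distance 2 in l1, but both are at distance 1 from their
pointwise maximum, so two steps of edge privacy give the privacy of B. *)

Section Pushforward.
Variables (R : realType) (T U : finType) (f : T -> U).

Definition pushforward (p : {ffun T -> R}) : {ffun U -> R} :=
  [ffun u => \sum_(t | f t == u) p t].

Lemma sum_pushforward (p : {ffun T -> R}) (g : U -> R) :
  \sum_u pushforward p u * g u = \sum_t p t * g (f t).
Proof.
rewrite (partition_big f predT) //=; apply: eq_bigr => u _.
by rewrite ffunE mulr_suml; apply: eq_bigr => t /eqP ->.
Qed.

Lemma prob_pushforward (p : {ffun T -> R}) (S : {set U}) :
  prob (pushforward p) S = prob p (f @^-1: S).
Proof.
rewrite /prob (partition_big f (mem S)) => [|t]; last by rewrite inE.
apply: eq_bigr => u uS; rewrite ffunE; apply: eq_bigl => t.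
by rewrite inE; case: (eqVneq (f t) u) => [->|]; rewrite ?uS ?andbF.
Qed.

Lemma pushforward_dist (p : {ffun T -> R}) :
  is_dist p -> is_dist (pushforward p).
Proof.
move=> [p_ge0 p_sum1]; split=> [u|].
  by rewrite ffunE; apply: sumr_ge0 => t _.
rewrite -p_sum1 (partition_big f predT) //; apply: eq_bigr => u _; exact: ffunE.
Qed.

End Pushforward.

Lemma dp_edge_trans (R : realType) n (eps delta : R)
    (A : (edge n -> R) -> {ffun {set edge n} -> R}) (w1 w2 w3 : edge n -> R) :
  dp_edge eps delta A ->
  \sum_e `|w1 e - w2 e| <= 1 -> \sum_e `|w2 e - w3 e| <= 1 ->
  forall S, prob (A w1) S <= expR (2 * eps) * prob (A w3) S + (1 + expR eps) * delta.
Proof.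
move=> Adp w12 w23 S; have e_ge0 := expR_ge0 eps.
have step12 := Adp _ _ w12 S; have step23 := Adp _ _ w23 S.
have : expR eps * prob (A w2) S <= expR eps * (expR eps * prob (A w3) S + delta).
  exact: ler_wpM2l.
by rewrite mulr_natl mulr2n expRD; nra.
Qed.

Section BitsGraph.
Variable n : nat.
Implicit Types (x y : bvec n) (M : {set edge n}).

Definition bits_weight x (e : edge n) : bool := ~~ e.1.1 && (e.1.2 == ~~ x e.2).

Definition bits_matching x : {set edge n} := [set e | (e.1.1 != e.1.2) == x e.2].

Definition matching_bits M : bvec n := [ffun c => (false, true, c) \in M].

Lemma hamming_sym x y : hamming x y = hamming y x.
Proof. by apply: eq_card => i; rewrite !inE eq_sym. Qed.

Lemma perfect_matching_cross M c : perfect_matching M ->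
  ((false, false, c) \in M) = ((false, true, c) \notin M).
Proof.
move=> /forallP /(_ (false, false, c)) /eqP; set I := [set e in M | _] => cardI.
have I_def : I = [set e in M | e \in [set (false, false, c); (false, true, c)]].
  apply/setP => -[[b1 b2] c']; rewrite !inE /esrc /edst /= !xpair_eqE /=.
  by case: b1; case: b2; rewrite ?andbF //= orbF ?andbb ?orbb.
case in00: ((false, false, c) \in M); case in01: ((false, true, c) \in M) => //.
- suff : (2 <= #|I|)%N by rewrite cardI.
  rewrite -(cards2 (false, false, c) (false, true, c)) //.
  apply/subset_leq_card/subsetP => e; rewrite I_def !inE.
  by case/orP => /eqP ->; rewrite ?in00 ?in01 !eqxx ?orbT.
- suff I0 : I = set0 by rewrite I0 cards0 in cardI.
  apply/setP => e; rewrite I_def !inE.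
  case: (eqVneq e (false, false, c)) => [->|_]; first by rewrite in00.
  by case: (eqVneq e (false, true, c)) => [->|_]; rewrite ?in01 ?andbF.
Qed.

Lemma bits_matching_perfect x : perfect_matching (bits_matching x).
Proof.
apply/forallP => -[[b1 b2] c]; apply/cards1P.
exists (if b1 then (addb b2 (x c), b2, c) else (b2, addb b2 (x c), c)).
apply/setP => -[[a a'] c']; case: b1; rewrite !inE /esrc /edst /= !xpair_eqE /=;
  case: (eqVneq c' c) => [->|/negbTE ne]; rewrite ?ne ?andbF //;
  by case: a; case: a'; case: b2; case: (x c).
Qed.

Lemma mweight_bits_matching (R : realType) x :
  mweight (fun e => (bits_weight x e)%:R : R) (bits_matching x) = 0.
Proof.
rewrite /mweight big1 // => -[[a a'] c]; rewrite inE /bits_weight /=.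
by case: a; case: a'; case: (x c).
Qed.

Lemma weighted_edge_in_perfect x M c : perfect_matching M ->
  ((false, ~~ x c, c) \in M) = (x c != matching_bits M c).
Proof.
move=> perfM; rewrite ffunE; case: (x c); rewrite /= ?perfect_matching_cross //.
by case: (_ \in M).
Qed.

Lemma mweight_perfect (R : realType) x M : perfect_matching M ->
  mweight (fun e => (bits_weight x e)%:R : R) M = (hamming x (matching_bits M))%:R.
Proof.
move=> perfM; rewrite /mweight (eq_bigr (fun e => if bits_weight x e then 1 else 0)).
  2: by move=> e _; case: bits_weight.
rewrite -big_mkcondr (eq_bigl (mem [set e in M | bits_weight x e])) ?sumr_const.
  2: by move=> e /=; rewrite inE.
pose weighted_edge c : edge n := (false, ~~ x c, c).
have -> : [set e in M | bits_weight x e] =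
          weighted_edge @: [set c | x c != matching_bits M c].
  apply/setP => -[[a a'] c]; rewrite inE /bits_weight /=.
  apply/andP/imsetP => [[inM /andP[/negbTE a0 /eqP a'x]]|[c' + [-> -> ->]]].
    by subst a a'; exists c; rewrite // inE -weighted_edge_in_perfect.
  by rewrite inE -weighted_edge_in_perfect // eqxx => ->.
by rewrite card_imset ?mulr1n // => c1 c2 [].
Qed.

Lemma bits_weight_or_dist (R : realType) x x' : hamming x x' = 1%N ->
  \sum_e `|(bits_weight x e)%:R - (bits_weight x e || bits_weight x' e)%:R| <= (1 : R).
Proof.
move=> /eqP/cards1P[c0 diff_c0].
pose e0 : edge n := (false, ~~ x' c0, c0).
apply: (@le_trans _ _ (\sum_(e : edge n) ((e == e0)%:R : R))); last first.
  by rewrite (bigD1 e0) //= eqxx big1 ?addr0 // => e /negbTE ->.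
apply: ler_sum => -[[a a'] c] _; rewrite /bits_weight /=.
case: a; first by rewrite subrr normr0.
case: (eqVneq a' (~~ x c)) => [->|a'x]; first by rewrite subrr normr0.
case: (eqVneq a' (~~ x' c)) => [a'x'|_]; last by rewrite subrr normr0.
have /set1P c_c0 : c \in [set c0].
  by rewrite -diff_c0 inE; apply: contra a'x; rewrite a'x' => /eqP ->.
by rewrite a'x' c_c0 eqxx sub0r normrN normr1.
Qed.

End BitsGraph.

Theorem lemmaB5 (R : realType) (n : nat) (hn : (1 <= n)%N)
    (eps delta alpha : R) (halpha : 0 <= alpha)
    (A : (edge n -> R) -> {ffun {set edge n} -> R})
    (hAdist : forall w, is_dist (A w))
    (hAdp : dp_edge eps delta A)
    (hAperf : forall w : edge n -> bool, forall M,
        A (fun e => (w e)%:R) M != 0 -> perfect_matching M)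
    (hAutil : forall w : edge n -> bool, forall M0 : {set edge n},
        perfect_matching M0 ->
        \sum_(M : {set edge n}) A (fun e => (w e)%:R) M
             * mweight (fun e => (w e)%:R) M
          <= mweight (fun e => (w e)%:R) M0 + alpha) :
  exists B : bvec n -> {ffun bvec n -> R},
    (forall x, is_dist (B x)) /\
    dp_bits (2 * eps) ((1 + expR eps) * delta) B /\
    (forall x, \sum_(y : bvec n) B x y * (hamming x y)%:R <= alpha).
Proof.
pose weight (x : bvec n) e : R := (bits_weight x e)%:R.
exists (fun x => pushforward (@matching_bits n) (A (weight x))).
split; [|split].
- by move=> x; apply: pushforward_dist.
- move=> x x' xx' S; rewrite !prob_pushforward.
  apply: (dp_edge_trans (w2 := fun e => (bits_weight x e || bits_weight x' e)%:R)).
  + exact: hAdp.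
  + exact: bits_weight_or_dist.
  + under eq_bigr => e _ do rewrite distrC orbC.
    apply: bits_weight_or_dist; rewrite hamming_sym; exact: xx'.
- move=> x; have util := hAutil (bits_weight x) _ (bits_matching_perfect x).
  rewrite mweight_bits_matching add0r in util.
  rewrite sum_pushforward (eq_bigr (fun M => A (weight x) M * mweight (weight x) M)) // => M _.
  have [->|AM_neq0] := eqVneq (A (weight x) M) 0; first by rewrite !mul0r.
  by rewrite mweight_perfect //; apply: hAperf AM_neq0.
Qed.
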